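(* Let $X$ be a complete metric space, let $f:X\to\mathbb{R}\cup\{+\infty\}$ be a proper lower semicontinuous function, let $r_0>0$ and let $k>0$. The following assertions are equivalent: (i) The multivalued mapping $F:X\rightrightarrows\mathbb{R}$, $F(x)=[f(x),+\infty)$, is $k$-metrically regular on $[0<f<r_0]\times(0,r_0)$; (ii) For all $r\in(0,r_0)$ and all $x\in[0<f<r_0]$, $$\operatorname{dist}(x,[f\le r])\le k\,(f(x)-r)^+;$$ (iii) For all $x\in[0<f<r_0]$, $|\nabla f|(x)\ge \frac1k$.
   Context: Notation: $[r_1<f<r_2]=\{x\in X: r_1<f(x)<r_2\}$, $[f\le r]=\{x\in X:f(x)\le r\}$; $a^+=\max\{a,0\}$; $\operatorname{dist}(x,S)=\inf_{y\in S}d(x,y)$ (equal to $+\infty$ if $S=\emptyset$). For a multivalued map $F:X\rightrightarrows Y$ between metric spaces, $\operatorname{Graph}F=\{(x,y):y\in F(x)\}$ and $F^{-1}(y)=\{x:y\in F(x)\}$. $F$ is $k$-metrically regular at $(\bar x,\bar y)\in\operatorname{Graph}F$ if there exist $\varepsilon,\delta>0$ such that $\operatorname{dist}(x,F^{-1}(y))\le k\operatorname{dist}(y,F(x))$ for all $(x,y)\in B(\bar x,\varepsilon)\times B(\bar y,\delta)$; $F$ is $k$-metrically regular on a set $V\subset X\times Y$ if it is $k$-metrically regular at every point of $\operatorname{Graph}F\cap V$. The strong slope of $f$ at $x\in\operatorname{dom}f$ is $|\nabla f|(x)=\limsup_{y\to x}\frac{(f(x)-f(y))^+}{d(x,y)}$.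 $B(x,r)$ is the open ball. *)

From Stdlib Require Import Reals.
From Coquelicot Require Import Coquelicot.
Open Scope R_scope.

Definition is_metric {X : Type} (d : X -> X -> R) : Prop :=
  (forall x y, 0 <= d x y) /\
  (forall x y, d x y = 0 <-> x = y) /\
  (forall x y, d x y = d y x) /\
  (forall x y z, d x z <= d x y + d y z).

Definition complete_metric {X : Type} (d : X -> X -> R) : Prop :=
  forall u : nat -> X,
    (forall eps, 0 < eps -> exists N, forall m n, (N <= m)%nat -> (N <= n)%nat -> d (u m) (u n) < eps) ->
    exists l, forall eps, 0 < eps -> exists N, forall n, (N <= n)%nat -> d (u n) l < eps.

(* f : X -> R ∪ {+oo} proper: never -oo, not identically +oo *)
Definition proper_fun {X : Type} (f : X -> Rbar) : Prop :=
  (forall x, f x <> m_infty) /\ (exists x, is_finite (f x)).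

Definition lsc {X : Type} (d : X -> X -> R) (f : X -> Rbar) : Prop :=
  forall x (a : R), Rbar_lt a (f x) ->
    exists eps, 0 < eps /\ forall y, d x y < eps -> Rbar_lt a (f y).

(* dist(x,S) = inf_{y in S} d(x,y), = +oo if S empty *)
Definition distS {X : Type} (d : X -> X -> R) (x : X) (S : X -> Prop) : Rbar :=
  Rbar_glb (fun t => exists y, S y /\ t = Finite (d x y)).

Definition dR (a b : R) : R := Rabs (a - b).

Definition metrically_regular_at {X Y : Type} (dX : X -> X -> R) (dY : Y -> Y -> R)
  (F : X -> Y -> Prop) (k : R) (xb : X) (yb : Y) : Prop :=
  exists eps delta, 0 < eps /\ 0 < delta /\
    forall x y, dX x xb < eps -> dY y yb < delta ->
      Rbar_le (distS dX x (fun x' => F x' y)) (Rbar_mult k (distS dY y (F x))).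

Definition metrically_regular_on {X Y : Type} (dX : X -> X -> R) (dY : Y -> Y -> R)
  (F : X -> Y -> Prop) (k : R) (V : X -> Y -> Prop) : Prop :=
  forall x y, F x y -> V x y -> metrically_regular_at dX dY F k x y.

(* the epigraphical multifunction F(x) = [f(x), +oo) (empty if f x = +oo) *)
Definition epi_map {X : Type} (f : X -> Rbar) : X -> R -> Prop :=
  fun x y => Rbar_le (f x) y.

Definition strict_level {X : Type} (f : X -> Rbar) (a b : R) : X -> Prop :=
  fun x => Rbar_lt a (f x) /\ Rbar_lt (f x) b.

Definition sublevel {X : Type} (f : X -> Rbar) (r : R) : X -> Prop :=
  fun x => Rbar_le (f x) r.

Definition slope_quot {X : Type} (d : X -> X -> R) (f : X -> Rbar) (x y : X) : R :=
  match f y with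
  | Finite fy => Rmax (real (f x) - fy) 0 / d x y
  | _ => 0
  end.

(* strong slope |∇f|(x) = limsup_{y -> x} (f x - f y)^+ / d(x,y)
   = inf_{delta>0} sup_{0<d(x,y)<delta} quotient  (0 at isolated points) *)
Definition strong_slope {X : Type} (d : X -> X -> R) (f : X -> Rbar) (x : X) : Rbar :=
  Rbar_glb (fun s => exists delta, 0 < delta /\
    s = Rbar_lub (fun t => t = Finite 0 \/
          exists y, 0 < d x y < delta /\ t = Finite (slope_quot d f x y))).

From Stdlib Require Import Reals Lra Classical ClassicalEpsilon.
From Coquelicot Require Import Coquelicot.
Open Scope R_scope.

(* The core is (iii) => (ii).  Given [x] with [f x > r] and [k' > k], Ekeland's
   variational principle for [max f r] with constant [1/k'] yields [z] with
   [d x z <= k' (f x - r)] which is a strict minimizer of [w |-> max (f w) r + d z w / k'].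
   If [f z > r], that minimality bounds the strong slope at [z] by [1/k' < 1/k],
   contradicting (iii); hence [z] lies in [[f <= r]].  Conversely, (ii), as well as
   metric regularity at [(x, f x)], provides points of [[f <= f x - h]] within [k h]
   of [x] for all small [h], so the slope at [x] is at least [1/k].  Finally, for
   (ii) => (i), points [x] near the graph point with [f x >= r0] lie so far above [y]
   that the error bound at the base point, moved to [x] by the triangle inequality,
   already suffices. *)

Lemma Rbar_glb_le_mem (E : Rbar -> Prop) (a : Rbar) : E a -> Rbar_le (Rbar_glb E) a.
Proof. exact (proj1 (proj2_sig (Rbar_ex_glb E)) a). Qed.

Lemma Rbar_glb_ge (E : Rbar -> Prop) (b : Rbar) :
  (forall a, E a -> Rbar_le b a) -> Rbar_le b (Rbar_glb E).
Proof. exact (proj2 (proj2_sig (Rbar_ex_glb E)) b). Qed.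

Lemma Rbar_glb_lt_ex (E : Rbar -> Prop) (b : Rbar) :
  Rbar_lt (Rbar_glb E) b -> exists a, E a /\ Rbar_lt a b.
Proof.
  intros Hlt. apply NNPP. intros Hno. apply (Rbar_lt_not_le _ _ Hlt).
  apply Rbar_glb_ge. intros a Ea. apply Rbar_not_lt_le. intros Hab. apply Hno. eauto.
Qed.

Lemma Rbar_lub_ge_mem (E : Rbar -> Prop) (a : Rbar) : E a -> Rbar_le a (Rbar_lub E).
Proof. exact (proj1 (proj2_sig (Rbar_ex_lub E)) a). Qed.

Lemma Rbar_lub_le (E : Rbar -> Prop) (b : Rbar) :
  (forall a, E a -> Rbar_le a b) -> Rbar_le (Rbar_lub E) b.
Proof. exact (proj2 (proj2_sig (Rbar_ex_lub E)) b). Qed.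

Lemma Rbar_le_plus_epsilon (x : Rbar) (a : R) :
  (forall e, 0 < e -> Rbar_le x (a + e)) -> Rbar_le x a.
Proof.
  intros H. destruct x as [x| |]; simpl.
  - apply Rle_plus_epsilon. exact H.
  - apply (H 1). lra.
  - exact I.
Qed.

Lemma Rbar_ge_minus_epsilon (a : R) (x : Rbar) :
  (forall e, 0 < e -> Rbar_le (a - e) x) -> Rbar_le a x.
Proof.
  intros H. destruct x as [x| |]; simpl.
  - apply Rle_plus_epsilon. intros e He. specialize (H e He). simpl in H. lra.
  - exact I.
  - apply (H 1). lra.
Qed.

Lemma Rbar_le_finite (x : Rbar) (c : R) : x <> m_infty -> Rbar_le x c -> x = Finite (real x).
Proof. destruct x; simpl; tauto. Qed.

Lemma strict_level_finite {X : Type} (f : X -> Rbar) (lo hi : R) (x : X) :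
  strict_level f lo hi x -> f x = Finite (real (f x)) /\ lo < real (f x) < hi.
Proof. intros [Hlo Hhi]. destruct (f x); simpl in *; tauto. Qed.

Section Metric.
Context {X : Type} {d : X -> X -> R} (Hd : is_metric d).

Lemma metric_ge0 x y : 0 <= d x y. Proof. apply Hd. Qed.
Lemma metric_eq0 x y : d x y = 0 -> x = y. Proof. apply Hd. Qed.
Lemma metric_self x : d x x = 0. Proof. apply Hd. reflexivity. Qed.
Lemma metric_sym x y : d x y = d y x. Proof. apply Hd. Qed.
Lemma metric_triangle x y z : d x z <= d x y + d y z. Proof. apply Hd. Qed.

Lemma metric_gt0 x y : x <> y -> 0 < d x y.
Proof.
  intros Hxy. destruct (Rle_lt_or_eq_dec _ _ (metric_ge0 x y)) as [|Hz]; [assumption|].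
  contradict Hxy. apply metric_eq0. auto.
Qed.

End Metric.

Section Distance.
Context {X : Type} (d : X -> X -> R).

Lemma distS_le_mem (x : X) (S : X -> Prop) (y : X) : S y -> Rbar_le (distS d x S) (d x y).
Proof. intros Sy. apply Rbar_glb_le_mem. eauto. Qed.

Lemma distS_ge (x : X) (S : X -> Prop) (c : R) :
  (forall y, S y -> c <= d x y) -> Rbar_le c (distS d x S).
Proof. intros H. apply Rbar_glb_ge. intros a [y [Sy ->]]. exact (H y Sy). Qed.

Lemma distS_lt_ex (x : X) (S : X -> Prop) (b : R) :
  Rbar_lt (distS d x S) b -> exists y, S y /\ d x y < b.
Proof. intros H. destruct (Rbar_glb_lt_ex _ _ H) as [a [[y [Sy ->]] Hy]]. eauto. Qed.

Lemma distS_empty (x : X) (S : X -> Prop) : (forall y, ~ S y) -> distS d x S = p_infty.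
Proof.
  intros H. apply Rbar_le_antisym.
  - destruct (distS d x S); exact I.
  - apply Rbar_glb_ge. intros a [y [Sy _]]. contradiction (H y).
Qed.

Lemma distS_le_triangle (Hd : is_metric d) (S : X -> Prop) (x x' : X) (b : R) :
  Rbar_le (distS d x' S) b -> Rbar_le (distS d x S) (d x x' + b).
Proof.
  intros H. apply Rbar_le_plus_epsilon. intros e He.
  destruct (distS_lt_ex x' S (b + e)) as [y [Sy Hy]].
  { eapply Rbar_le_lt_trans; [exact H|]. simpl. lra. }
  eapply Rbar_le_trans; [apply (distS_le_mem x S y Sy)|]. simpl.
  pose proof (metric_triangle Hd x x' y). lra.
Qed.

End Distance.

Lemma distS_dR_halfline (b y : R) : distS dR y (fun t => Rbar_le b t) = Finite (Rmax (b - y) 0).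
Proof.
  apply Rbar_le_antisym.
  - eapply Rbar_le_trans; [apply (distS_le_mem dR y _ (Rmax b y)); apply Rmax_l|].
    simpl. unfold dR, Rmax. destruct (Rle_dec b y), (Rle_dec (b - y) 0).
    all: try (rewrite Rminus_diag, Rabs_R0); try lra.
    rewrite Rabs_minus_sym, Rabs_right; lra.
  - apply distS_ge. intros t Ht. simpl in Ht. unfold dR. apply Rmax_lub.
    + rewrite Rabs_minus_sym. eapply Rle_trans; [|apply Rle_abs]. lra.
    + apply Rabs_pos.
Qed.

Section StrongSlope.
Context {X : Type} (d : X -> X -> R) (f : X -> Rbar).

Lemma strong_slope_ge (x : X) (s : R) :
  (forall delta t, 0 < delta -> 0 < t < s ->
     exists y c, 0 < d x y < delta /\ f y = Finite c /\ t * d x y <= real (f x) - c) ->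
  Rbar_le s (strong_slope d f x).
Proof.
  intros Hsteep. apply Rbar_glb_ge. intros a [delta [Hdelta ->]].
  apply Rbar_ge_minus_epsilon. intros e He.
  destruct (Rle_lt_dec (s - e) 0) as [Hle|Hpos].
  { eapply Rbar_le_trans; [|apply Rbar_lub_ge_mem; left; reflexivity]. exact Hle. }
  destruct (Hsteep delta (s - e) Hdelta ltac:(lra)) as [y [c [[Hy0 Hy] [Ey Hq]]]].
  eapply Rbar_le_trans; [|apply Rbar_lub_ge_mem; right; exists y; split; [split; eassumption|reflexivity]].
  unfold slope_quot. rewrite Ey. simpl. apply Rle_div_r; [lra|].
  eapply Rle_trans; [exact Hq|]. apply Rmax_l.
Qed.

Lemma strong_slope_le (z : X) (b lam delta : R) :
  f z = Finite b -> 0 <= lam -> 0 < delta ->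
  (forall y c, 0 < d z y < delta -> f y = Finite c -> b - c <= lam * d z y) ->
  Rbar_le (strong_slope d f z) lam.
Proof.
  intros Ez Hlam Hdelta Hflat.
  eapply Rbar_le_trans; [apply Rbar_glb_le_mem; exists delta; split; [exact Hdelta|reflexivity]|].
  apply Rbar_lub_le. intros a [->|[y [Hy ->]]]; simpl; [exact Hlam|].
  unfold slope_quot. destruct (f y) as [c| |] eqn:Ey; simpl; try exact Hlam.
  rewrite Ez. simpl. apply Rle_div_l; [lra|]. apply Rmax_lub.
  - exact (Hflat y c Hy Ey).
  - apply Rmult_le_pos; lra.
Qed.

Hypothesis d_metric : is_metric d.
Hypothesis f_not_minfty : forall x, f x <> m_infty.

Lemma strong_slope_ge_of_dist_sublevel (x : X) (a k delta : R) :
  f x = Finite a -> 0 < k -> 0 < delta ->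
  (forall h, 0 < h < delta -> Rbar_le (distS d x (sublevel f (a - h))) (k * h)) ->
  Rbar_le (/ k) (strong_slope d f x).
Proof.
  intros Ex Hk Hdelta Hdist. apply strong_slope_ge. intros dl t Hdl [Ht Hts].
  set (h := Rmin (delta / 2) (dl * t)).
  assert (Hh : 0 < h < delta).
  { split; [apply Rmin_pos; nra|]. pose proof (Rmin_l (delta / 2) (dl * t)). unfold h. lra. }
  assert (Hkt : k * t < 1).
  { apply Rmult_lt_compat_l with (r := k) in Hts; [|lra]. rewrite Rinv_r in Hts; lra. }
  destruct (distS_lt_ex d x (sublevel f (a - h)) (h / t)) as [y [Sy Hy]].
  { eapply Rbar_le_lt_trans; [exact (Hdist h Hh)|]. simpl. apply (proj1 (Rlt_div_r (k * h) h t Ht)).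
    assert (0 < h * (1 - k * t)) by (apply Rmult_lt_0_compat; lra). lra. }
  unfold sublevel in Sy. pose proof (Rbar_le_finite _ _ (f_not_minfty y) Sy) as Ey.
  rewrite Ey in Sy. simpl in Sy.
  assert (Hxy : 0 < d x y).
  { apply (metric_gt0 d_metric). intros <-. rewrite Ex in Sy. simpl in Sy. lra. }
  assert (Hth : d x y * t < h) by exact (proj2 (Rlt_div_r _ _ _ Ht) Hy).
  exists y, (real (f y)). split; [split; [exact Hxy|]|split].
  - assert (h <= dl * t) by apply Rmin_r. nra.
  - exact Ey.
  - rewrite Ex. simpl. lra.
Qed.

End StrongSlope.

Lemma inv_INR_S_lt (c : R) : 0 < c -> exists N, / INR (S N) < c.
Proof.
  intros Hc. destruct (archimed_cor1 c Hc) as [[|N] [HN HN0]]; [inversion HN0|]. eauto.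
Qed.

Section Ekeland.
Context {X : Type} (d : X -> X -> R) (g : X -> Rbar) (m lam : R).
Hypothesis d_metric : is_metric d.
Hypothesis d_complete : complete_metric d.
Hypothesis g_lsc : lsc d g.
Hypothesis g_ge : forall x, Rbar_le m (g x).
Hypothesis lam_gt0 : 0 < lam.

(* [real (g z)] is junk when [g z = p_infty]; every cone used below has an apex [z]
   in its own cone, which forces [g z] to be finite. *)
Definition ekeland_cone (z w : X) : Prop := Rbar_le (g w) (real (g z) - lam * d z w).

Lemma ekeland_cone_finite z w : ekeland_cone z w -> g w = Finite (real (g w)) /\ m <= real (g w).
Proof. unfold ekeland_cone. pose proof (g_ge w). destruct (g w); simpl in *; tauto. Qed.

Lemma ekeland_cone_real z w : ekeland_cone z w -> real (g w) <= real (g z) - lam * d z w.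
Proof.
  intros H. pose proof (proj1 (ekeland_cone_finite z w H)) as Ew.
  unfold ekeland_cone in H. rewrite Ew in H. exact H.
Qed.

Lemma ekeland_cone_apex z w : ekeland_cone z w -> ekeland_cone w w.
Proof.
  intros H. unfold ekeland_cone. rewrite (metric_self d_metric), Rmult_0_r, Rminus_0_r.
  rewrite (proj1 (ekeland_cone_finite z w H)). apply Rle_refl.
Qed.

Lemma ekeland_cone_trans y z w : ekeland_cone y z -> ekeland_cone z w -> ekeland_cone y w.
Proof.
  intros Hyz Hzw. pose proof (ekeland_cone_real y z Hyz).
  pose proof (metric_triangle d_metric y z w).
  eapply Rbar_le_trans; [exact Hzw|]. simpl. nra.
Qed.

Lemma ekeland_cone_closed c z :
  (forall eps, 0 < eps -> exists y, ekeland_cone c y /\ d z y < eps) -> ekeland_cone c z.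
Proof.
  intros Hnear. set (b := real (g c) - lam * d c z). apply Rbar_not_lt_le. intros Hlt.
  assert (Heta : exists eta, 0 < eta /\ Rbar_lt (b + eta) (g z)).
  { destruct (g z) as [v| |]; simpl in Hlt |- *; try contradiction.
    - exists ((v - b) / 2). unfold b in *. split; lra.
    - exists 1. split; [lra|exact I]. }
  destruct Heta as [eta [Heta Hbz]].
  destruct (g_lsc z (b + eta) Hbz) as [e0 [He0 Habove]].
  destruct (Hnear (Rmin e0 (eta / lam))) as [y [Hy Hzy]].
  { apply Rmin_pos; [lra|]. apply Rdiv_lt_0_compat; lra. }
  assert (Hlam_zy : lam * d z y < eta).
  { apply Rmult_lt_compat_l with (r := lam) in Hzy; [|lra].
    eapply Rlt_le_trans; [exact Hzy|].
    apply Rle_trans with (lam * (eta / lam)); [apply Rmult_le_compat_l; [lra|apply Rmin_r]|].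
    right. field. lra. }
  pose proof (Habove y (Rlt_le_trans _ _ _ Hzy (Rmin_l _ _))) as Hgy.
  pose proof (ekeland_cone_real c y Hy) as Hcy.
  pose proof (metric_triangle d_metric c y z) as Htri. rewrite (metric_sym d_metric y z) in Htri.
  rewrite (proj1 (ekeland_cone_finite c y Hy)) in Hgy. simpl in Hgy. unfold b in Hgy. nra.
Qed.

Lemma ekeland_cone_near_inf z e : ekeland_cone z z -> 0 < e ->
  exists w, ekeland_cone z w /\ forall v, ekeland_cone z v -> real (g w) <= real (g v) + e.
Proof.
  intros Hz He. apply NNPP. intros Hno.
  assert (Hdescent : forall w, ekeland_cone z w -> exists v, ekeland_cone z v /\ real (g v) < real (g w) - e).
  { intros w Hw. apply NNPP. intros Hv. apply Hno. exists w. split; [exact Hw|].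
    intros v Hzv. apply Rnot_lt_le. intros Hlt. apply Hv. exists v. split; [exact Hzv|lra]. }
  assert (Hiter : forall n, exists w, ekeland_cone z w /\ real (g w) <= real (g z) - INR n * e).
  { induction n as [|n [w [Hw Hgw]]].
    - exists z. split; [exact Hz|]. simpl. lra.
    - destruct (Hdescent w Hw) as [v [Hv Hgv]]. exists v. split; [exact Hv|].
      rewrite S_INR. lra. }
  destruct (INR_unbounded ((real (g z) - m) / e)) as [n Hn].
  destruct (Hiter n) as [w [Hw Hgw]].
  pose proof (proj2 (ekeland_cone_finite z w Hw)) as Hwm.
  assert (Hne : INR n * e > (real (g z) - m) / e * e) by (apply Rmult_lt_compat_r; lra).
  replace ((real (g z) - m) / e * e) with (real (g z) - m) in Hne by (field; lra). lra.
Qed.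

Lemma ekeland_step_ex (n : nat) (z : X) : exists w, ekeland_cone z z ->
  ekeland_cone z w /\ forall v, ekeland_cone z v -> real (g w) <= real (g v) + / INR (S n).
Proof.
  destruct (classic (ekeland_cone z z)) as [Hz|Hz].
  - destruct (ekeland_cone_near_inf z (/ INR (S n)) Hz) as [w Hw].
    { apply Rinv_0_lt_compat, lt_0_INR, Nat.lt_0_succ. }
    exists w. auto.
  - exists z. tauto.
Qed.

Definition ekeland_step (n : nat) (z : X) : X :=
  proj1_sig (constructive_indefinite_description _ (ekeland_step_ex n z)).

Fixpoint ekeland_seq (x0 : X) (n : nat) : X :=
  match n with O => x0 | S n => ekeland_step n (ekeland_seq x0 n) end.

Variable x0 : X.
Hypothesis x0_apex : ekeland_cone x0 x0.

Let u := ekeland_seq x0.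

Lemma ekeland_seq_step n : ekeland_cone (u n) (u n) ->
  ekeland_cone (u n) (u (S n)) /\
  forall v, ekeland_cone (u n) v -> real (g (u (S n))) <= real (g v) + / INR (S n).
Proof. exact (proj2_sig (constructive_indefinite_description _ (ekeland_step_ex n (u n)))). Qed.

Lemma ekeland_seq_apex n : ekeland_cone (u n) (u n).
Proof.
  induction n as [|n IH]; [exact x0_apex|].
  exact (ekeland_cone_apex _ _ (proj1 (ekeland_seq_step n IH))).
Qed.

Lemma ekeland_seq_nested n p : (n <= p)%nat -> ekeland_cone (u n) (u p).
Proof.
  induction 1 as [|p _ IH]; [apply ekeland_seq_apex|].
  exact (ekeland_cone_trans _ _ _ IH (proj1 (ekeland_seq_step p (ekeland_seq_apex p)))).
Qed.

(* A point of the cone of [u (S n)] lies in the cone of [u n], where [u (S n)] is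
   [1/(n+1)]-minimal; the cone inequality then bounds its distance to [u (S n)]. *)
Lemma ekeland_seq_radius n v : ekeland_cone (u (S n)) v -> lam * d (u (S n)) v <= / INR (S n).
Proof.
  intros Hv. destruct (ekeland_seq_step n (ekeland_seq_apex n)) as [Hstep Hmin].
  pose proof (Hmin v (ekeland_cone_trans _ _ _ Hstep Hv)).
  pose proof (ekeland_cone_real _ _ Hv). lra.
Qed.

Lemma ekeland_seq_diameter eps : 0 < eps -> exists N,
  forall v w, ekeland_cone (u (S N)) v -> ekeland_cone (u (S N)) w -> d v w < eps.
Proof.
  intros Heps. destruct (inv_INR_S_lt (lam * eps / 2)) as [N HN].
  { apply Rmult_lt_0_compat; [apply Rmult_lt_0_compat|]; lra. }
  exists N. intros v w Hv Hw.
  pose proof (ekeland_seq_radius N v Hv) as Hrv.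
  pose proof (ekeland_seq_radius N w Hw) as Hrw.
  pose proof (metric_triangle d_metric v (u (S N)) w) as Htri.
  rewrite (metric_sym d_metric v (u (S N))) in Htri.
  apply Rmult_lt_reg_l with lam; [exact lam_gt0|].
  apply Rmult_le_compat_l with (r := lam) in Htri; [|lra].
  rewrite Rmult_plus_distr_l in Htri. lra.
Qed.

Lemma ekeland_seq_cauchy : forall eps, 0 < eps ->
  exists N, forall p q, (N <= p)%nat -> (N <= q)%nat -> d (u p) (u q) < eps.
Proof.
  intros eps Heps. destruct (ekeland_seq_diameter eps Heps) as [N HN].
  exists (S N). intros p q Hp Hq. apply HN; apply ekeland_seq_nested; assumption.
Qed.

Lemma ekeland_principle : exists z, ekeland_cone x0 z /\ forall w, ekeland_cone z w -> w = z.
Proof.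
  destruct (d_complete u ekeland_seq_cauchy) as [z Hz].
  assert (Hz_in : forall n, ekeland_cone (u n) z).
  { intros n. apply ekeland_cone_closed. intros eps Heps.
    destruct (Hz eps Heps) as [N HN]. exists (u (max n N)). split.
    - apply ekeland_seq_nested, Nat.le_max_l.
    - rewrite (metric_sym d_metric). apply HN, Nat.le_max_r. }
  exists z. split; [exact (Hz_in O)|].
  intros w Hw. symmetry. apply (metric_eq0 d_metric). apply Rle_antisym; [|apply (metric_ge0 d_metric)].
  apply Rle_plus_epsilon. intros eps Heps. rewrite Rplus_0_l.
  destruct (ekeland_seq_diameter eps Heps) as [N HN].
  apply Rlt_le, HN; [apply Hz_in|]. exact (ekeland_cone_trans _ _ _ (Hz_in (S N)) Hw).
Qed.

End Ekeland.

Definition Rbar_maxr (x : Rbar) (r : R) : Rbar :=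
  match x with
  | Finite v => Finite (Rmax v r)
  | p_infty => p_infty
  | m_infty => Finite r
  end.

Lemma Rbar_maxr_ge (x : Rbar) (r : R) : Rbar_le r (Rbar_maxr x r).
Proof. destruct x; simpl; [apply Rmax_r|exact I|apply Rle_refl]. Qed.

Lemma Rbar_maxr_le (x : Rbar) (r c : R) : Rbar_le (Rbar_maxr x r) c -> Rbar_le x c /\ r <= c.
Proof.
  destruct x as [v| |]; simpl; try tauto.
  intros H. split; eapply Rle_trans; [apply Rmax_l|exact H|apply Rmax_r|exact H].
Qed.

Lemma lsc_maxr {X : Type} (d : X -> X -> R) (f : X -> Rbar) (r : R) :
  lsc d f -> lsc d (fun w => Rbar_maxr (f w) r).
Proof.
  intros Hf x a Ha.
  assert (Hcase : Rbar_lt a (f x) \/ a < r).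
  { destruct (f x) as [v| |]; simpl in Ha |- *; auto.
    unfold Rmax in Ha. destruct (Rle_dec v r); auto. }
  destruct Hcase as [Hfx|Har].
  - destruct (Hf x a Hfx) as [eps [Heps Hnear]]. exists eps. split; [exact Heps|].
    intros y Hy. eapply Rbar_lt_le_trans; [exact (Hnear y Hy)|].
    destruct (f y); simpl; [apply Rmax_l|exact I|exact I].
  - exists 1. split; [lra|]. intros y _.
    eapply Rbar_lt_le_trans; [|apply Rbar_maxr_ge]. exact Har.
Qed.

Section Level.
Context {X : Type} (d : X -> X -> R) (f : X -> Rbar).
Hypothesis d_metric : is_metric d.
Hypothesis d_complete : complete_metric d.
Hypothesis f_lsc : lsc d f.
Hypothesis f_not_minfty : forall x, f x <> m_infty.

Lemma ekeland_above_level (x : X) (a r lam : R) :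
  f x = Finite a -> r <= a -> 0 < lam ->
  exists z, Rbar_le (f z) a /\ lam * d x z <= a - r /\
    forall y c, y <> z -> f y = Finite c -> r < c -> real (f z) - c < lam * d z y.
Proof.
  intros Ex Hra Hlam. set (g := fun w => Rbar_maxr (f w) r).
  assert (Hgx : g x = Finite a) by (unfold g; rewrite Ex; simpl; rewrite Rmax_left; auto).
  destruct (ekeland_principle d g r lam d_metric d_complete (lsc_maxr d f r f_lsc)
              (fun w => Rbar_maxr_ge (f w) r) Hlam x) as [z [Hxz Hmin]].
  { unfold ekeland_cone. rewrite (metric_self d_metric), Hgx. simpl. lra. }
  unfold ekeland_cone in Hxz. rewrite Hgx in Hxz. simpl in Hxz.
  destruct (Rbar_maxr_le _ _ _ Hxz) as [Hfz Hrz].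
  pose proof (Rmult_le_pos _ _ (Rlt_le _ _ Hlam) (metric_ge0 d_metric x z)) as Hd.
  exists z. split; [|split].
  - eapply Rbar_le_trans; [exact Hfz|]. simpl. lra.
  - lra.
  - intros y c Hyz Ey Hrc. apply Rnot_le_lt. intros Hle. apply Hyz, Hmin.
    pose proof (Rbar_le_finite _ _ (f_not_minfty z) Hfz) as Ez.
    unfold ekeland_cone, g. rewrite Ey, Ez. simpl.
    rewrite (Rmax_left c r) by lra. pose proof (Rmax_l (real (f z)) r). lra.
Qed.

End Level.

Definition sublevel_error_bound {X : Type} (d : X -> X -> R) (f : X -> Rbar) (r0 k : R) : Prop :=
  forall r x, 0 < r < r0 -> strict_level f 0 r0 x ->
    Rbar_le (distS d x (sublevel f r)) (k * Rmax (real (f x) - r) 0).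

Definition slope_lower_bound {X : Type} (d : X -> X -> R) (f : X -> Rbar) (r0 k : R) : Prop :=
  forall x, strict_level f 0 r0 x -> Rbar_le (/ k) (strong_slope d f x).

Section Equivalence.
Context {X : Type} (d : X -> X -> R) (f : X -> Rbar) (r0 k : R).
Hypothesis d_metric : is_metric d.
Hypothesis f_not_minfty : forall x, f x <> m_infty.
Hypothesis k_gt0 : 0 < k.

Lemma slope_lower_bound_of_error_bound :
  sublevel_error_bound d f r0 k -> slope_lower_bound d f r0 k.
Proof.
  intros Hbound x Hx. destruct (strict_level_finite f 0 r0 x Hx) as [Ex Ha].
  apply (strong_slope_ge_of_dist_sublevel d f d_metric f_not_minfty x (real (f x)) k (real (f x)));
    [exact Ex|exact k_gt0|lra|].
  intros h Hh. specialize (Hbound (real (f x) - h) x ltac:(lra) Hx).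
  replace (real (f x) - (real (f x) - h)) with h in Hbound by ring.
  rewrite Rmax_left in Hbound by lra. exact Hbound.
Qed.

Lemma slope_lower_bound_of_regular :
  metrically_regular_on d dR (epi_map f) k (fun x y => strict_level f 0 r0 x /\ 0 < y < r0) ->
  slope_lower_bound d f r0 k.
Proof.
  intros Hreg x Hx. destruct (strict_level_finite f 0 r0 x Hx) as [Ex Ha].
  set (a := real (f x)) in *.
  destruct (Hreg x a) as [eps [delta [Heps [Hdelta Hreg_x]]]].
  { unfold epi_map. rewrite Ex. apply Rle_refl. }
  { split; [exact Hx|lra]. }
  apply (strong_slope_ge_of_dist_sublevel d f d_metric f_not_minfty x a k delta Ex k_gt0 Hdelta).
  intros h Hh. specialize (Hreg_x x (a - h)).
  unfold epi_map at 2 in Hreg_x. rewrite Ex, distS_dR_halfline in Hreg_x. simpl in Hreg_x.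
  replace (a - (a - h)) with h in Hreg_x by ring. rewrite Rmax_left in Hreg_x by lra.
  apply Hreg_x.
  - rewrite (metric_self d_metric). exact Heps.
  - unfold dR. replace (a - h - a) with (- h) by ring. rewrite Rabs_Ropp, Rabs_right; lra.
Qed.

Lemma regular_of_error_bound :
  0 < r0 -> sublevel_error_bound d f r0 k ->
  metrically_regular_on d dR (epi_map f) k (fun x y => strict_level f 0 r0 x /\ 0 < y < r0).
Proof.
  intros Hr0 Hbound xb yb Hgraph [Hxb Hyb].
  destruct (strict_level_finite f 0 r0 xb Hxb) as [Exb Ha]. set (a := real (f xb)) in *.
  unfold epi_map in Hgraph. rewrite Exb in Hgraph. simpl in Hgraph.
  set (delta := Rmin yb (r0 - yb) / 4).
  assert (Hdelta : 0 < delta) by (apply Rdiv_lt_0_compat; [apply Rmin_pos|]; lra).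
  assert (Hdelta_y : 4 * delta <= yb) by (pose proof (Rmin_l yb (r0 - yb)); unfold delta; lra).
  assert (Hdelta_r0 : 4 * delta <= r0 - yb) by (pose proof (Rmin_r yb (r0 - yb)); unfold delta; lra).
  exists (k * delta), delta. split; [nra|split; [exact Hdelta|]].
  intros x y Hx Hy. unfold dR in Hy. apply Rabs_def2 in Hy.
  assert (Hy0 : 0 < y < r0) by lra.
  destruct (f x) as [b| |] eqn:Ex; [| |contradiction (f_not_minfty x)].
  2: { unfold epi_map at 2. rewrite (distS_empty dR y) by (intros t; rewrite Ex; auto).
       rewrite Rbar_mult_comm, (is_Rbar_mult_unique _ _ _ (is_Rbar_mult_p_infty_pos k k_gt0)).
       destruct (distS d x _); exact I. }
  unfold epi_map at 2. rewrite Ex, distS_dR_halfline. simpl.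
  destruct (Rle_lt_dec b y) as [Hby|Hyb'].
  { eapply Rbar_le_trans; [apply (distS_le_mem d x _ x); change (Rbar_le (f x) y); rewrite Ex; exact Hby|].
    rewrite (metric_self d_metric). simpl. apply Rmult_le_pos; [lra|apply Rmax_r]. }
  destruct (Rlt_le_dec b r0) as [Hbr0|Hr0b].
  { assert (Sx : strict_level f 0 r0 x) by (split; rewrite Ex; simpl; lra).
    pose proof (Hbound y x Hy0 Sx) as Hx_bound. rewrite Ex in Hx_bound. exact Hx_bound. }
  eapply Rbar_le_trans; [exact (distS_le_triangle d d_metric _ x xb _ (Hbound y xb Hy0 Hxb))|].
  simpl. fold a. rewrite (Rmax_left (b - y)) by lra.
  assert (Rmax (a - y) 0 <= delta) by (apply Rmax_lub; lra).
  nra.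
Qed.

Hypothesis d_complete : complete_metric d.
Hypothesis f_lsc : lsc d f.

Lemma error_bound_of_slope_lower_bound :
  slope_lower_bound d f r0 k -> sublevel_error_bound d f r0 k.
Proof.
  intros Hslope r x Hr Hx.
  destruct (strict_level_finite f 0 r0 x Hx) as [Ex Ha]. set (a := real (f x)) in *.
  destruct (Rle_lt_dec a r) as [Har|Hra].
  { eapply Rbar_le_trans; [apply (distS_le_mem d x _ x); unfold sublevel; rewrite Ex; exact Har|].
    rewrite (metric_self d_metric). simpl. apply Rmult_le_pos; [lra|apply Rmax_r]. }
  rewrite Rmax_left by lra. apply Rbar_le_plus_epsilon. intros e He.
  set (k' := k + e / (a - r)).
  assert (Hkk' : k < k') by (assert (0 < e / (a - r)) by (apply Rdiv_lt_0_compat; lra); unfold k'; lra).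
  assert (Hlam : 0 < / k') by (apply Rinv_0_lt_compat; lra).
  destruct (ekeland_above_level d f d_metric d_complete f_lsc f_not_minfty x a r (/ k')
              Ex (Rlt_le _ _ Hra) Hlam) as [z [Hza [Hxz Hsteep]]].
  destruct (Rbar_le_dec (f z) r) as [Hzr|Hzr].
  - eapply Rbar_le_trans; [exact (distS_le_mem d x _ z Hzr)|]. simpl.
    replace (k * (a - r) + e) with (k' * (a - r)) by (unfold k'; field; lra).
    replace (d x z) with (k' * (/ k' * d x z)) by (field; lra).
    apply Rmult_le_compat_l; lra.
  - apply Rbar_not_le_lt in Hzr.
    pose proof (Rbar_le_finite _ _ (f_not_minfty z) Hza) as Ez.
    rewrite Ez in Hza, Hzr. simpl in Hza, Hzr.
    destruct (f_lsc z r) as [delta [Hdelta Habove]]; [rewrite Ez; exact Hzr|].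
    assert (Hslope_le : Rbar_le (strong_slope d f z) (/ k')).
    { apply (strong_slope_le d f z (real (f z)) (/ k') delta Ez (Rlt_le _ _ Hlam) Hdelta).
      intros y c [Hzy Hy] Ey. apply Rlt_le, Hsteep; [|exact Ey|].
      - intros ->. rewrite (metric_self d_metric) in Hzy. lra.
      - specialize (Habove y Hy). rewrite Ey in Habove. exact Habove. }
    assert (Sz : strict_level f 0 r0 z) by (split; rewrite Ez; simpl; lra).
    pose proof (Rbar_le_trans _ _ _ (Hslope z Sz) Hslope_le) as Hkk. simpl in Hkk.
    assert (/ k' < / k) by (apply Rinv_lt_contravar; nra). lra.
Qed.

End Equivalence.

Theorem theorem2p2 (X : Type) (d : X -> X -> R) (f : X -> Rbar) (r0 k : R) :
  is_metric d -> complete_metric d -> proper_fun f -> lsc d f ->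
  0 < r0 -> 0 < k ->
  ((metrically_regular_on d dR (epi_map f) k
       (fun x y => strict_level f 0 r0 x /\ 0 < y < r0))
   <->
   (forall r x, 0 < r < r0 -> strict_level f 0 r0 x ->
       Rbar_le (distS d x (sublevel f r)) (k * Rmax (real (f x) - r) 0)))
  /\
  ((forall r x, 0 < r < r0 -> strict_level f 0 r0 x ->
       Rbar_le (distS d x (sublevel f r)) (k * Rmax (real (f x) - r) 0))
   <->
   (forall x, strict_level f 0 r0 x -> Rbar_le (/ k) (strong_slope d f x))).
Proof.
  intros Hd Hcomplete [Hf _] Hlsc Hr0 Hk.
  pose proof (error_bound_of_slope_lower_bound d f r0 k Hd Hf Hk Hcomplete Hlsc) as iii_ii.
  pose proof (slope_lower_bound_of_error_bound d f r0 k Hd Hf Hk) as ii_iii.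
  pose proof (slope_lower_bound_of_regular d f r0 k Hd Hf Hk) as i_iii.
  pose proof (regular_of_error_bound d f r0 k Hd Hf Hk Hr0) as ii_i.
  split; split.
  - intros Hi. exact (iii_ii (i_iii Hi)).
  - exact ii_i.
  - exact ii_iii.
  - exact iii_ii.
Qed.
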